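(* Let $w$ be a word over $\{L,R\}$ and let $u\in\mathcal{L}_w$. Then $u$ is derivable from $w$, i.e. $u$ is a tail of a word obtained from $w$ by finitely many applications of the reduction rules (1), (1'), (2), (2').
   Context: Words are finite strings (including the empty word) over $\{L,R\}$; $|w|$ is the length. A tail of $w$ is any word $v'$ with $w=vv'$ for some word $v$. A word $u$ is derivable from $w$ if it is obtained from $w$ by finitely many successive applications (in any order) of the following rules, where $v,v'$ denote arbitrary words: (1) $vRRv'\Rightarrow vRv'$; (1') $vLLv'\Rightarrow vLv'$; (2) $vLRv'\Rightarrow vv'$; (2') $vRLv'\Rightarrow vv'$ (rules of reduction); (3) $vv'\Rightarrow v'$ (tail formation). For a set $\mathcal{S}$ of words, $\mathcal{S}^L$ (resp. $\mathcal{S}^R$) is the set of words in $\mathcal{S}$ starting with $L$ (resp. $R$), and $L(\mathcal{S})=\{Ls: s\in\mathcal{S}\}$, $R(\mathcal{S})=\{Rs:s\in\mathcal{S}\}$. The language $\mathcal{L}_w$ is defined recursively: if $|w|\le 2$, $\mathcal{L}_w$ is the set of tails of $w$; if $|w|>2$, then $\mathcal{L}_w=\mathcal{L}_{Rw'}\cup L(\mathcal{L}^R_{Rw'})$ when $w=LRw'$; $\mathcal{L}_w=\mathcal{L}_{LLw'}\cup L(\mathcal{L}^L_{LLw'})$ when $w=LLLw'$; $\mathcal{L}_w=\mathcal{L}_{LRw'}\cup L(\mathcal{L}_{LRw'})$ when $w=LLRw'$; and dually (interchanging the letters $L$ and $R$ everywhere) when $w$ starts with $R$. *)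

From Stdlib Require Import List Relations.
Import ListNotations.

Inductive letter : Type := L | R.

Definition word := list letter.

Definition is_tail (v' w : word) : Prop := exists v : word, w = v ++ v'.

Definition starts_with (a : letter) (s : word) : Prop := exists t, s = a :: t.

Inductive step : word -> word -> Prop :=
| rule1  : forall v v', step (v ++ R :: R :: v') (v ++ R :: v')
| rule1' : forall v v', step (v ++ L :: L :: v') (v ++ L :: v')
| rule2  : forall v v', step (v ++ L :: R :: v') (v ++ v')
| rule2' : forall v v', step (v ++ R :: L :: v') (v ++ v')
| rule3  : forall v v', step (v ++ v') v'.

Definition derivable (w u : word) : Prop := clos_refl_trans word step w u.

Fixpoint lang (w : word) : word -> Prop :=
  match w with
  | L :: ((R :: _ :: _) as v) =>
      fun u => lang v u \/ exists s, u = L :: s /\ lang v s /\ starts_with R s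
  | L :: ((L :: L :: _) as v) =>
      fun u => lang v u \/ exists s, u = L :: s /\ lang v s /\ starts_with L s
  | L :: ((L :: R :: _) as v) =>
      fun u => lang v u \/ exists s, u = L :: s /\ lang v s
  | R :: ((L :: _ :: _) as v) =>
      fun u => lang v u \/ exists s, u = R :: s /\ lang v s /\ starts_with L s
  | R :: ((R :: R :: _) as v) =>
      fun u => lang v u \/ exists s, u = R :: s /\ lang v s /\ starts_with R s
  | R :: ((R :: L :: _) as v) =>
      fun u => lang v u \/ exists s, u = R :: s /\ lang v s
  | _ => fun u => is_tail u w
  end.

From Stdlib Require Import List Relations.
Import ListNotations.

(* Induction along the recursive definition of [L_w].  Derivability alone
   cannot be carried, because tail formation does not survive prepending a
   letter while the recursive clauses of [L_w] prepend one.  So for [u] in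
   [L_(a t)] we also record reductions (rules (1)-(2'), which do survive
   prepending) from [a t], [opp a a t] and [a a t]; the clauses putting [a] in
   front of [s] then only need [a t' ->* a s], which these supply. *)

Inductive reduction_step : word -> word -> Prop :=
| reduction_RR : forall v v', reduction_step (v ++ R :: R :: v') (v ++ R :: v')
| reduction_LL : forall v v', reduction_step (v ++ L :: L :: v') (v ++ L :: v')
| reduction_LR : forall v v', reduction_step (v ++ L :: R :: v') (v ++ v')
| reduction_RL : forall v v', reduction_step (v ++ R :: L :: v') (v ++ v').

Definition reduces : word -> word -> Prop := clos_refl_trans word reduction_step.

Definition opp (a : letter) : letter := match a with L => R | R => L end.

Lemma letter_eq_or_opp (a b : letter) : b = a \/ b = opp a.
Proof. destruct a, b; auto. Qed.

Lemma opp_neq (a : letter) : a <> opp a.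
Proof. destruct a; discriminate. Qed.

Lemma opp_involutive (a : letter) : opp (opp a) = a.
Proof. destruct a; reflexivity. Qed.

Lemma reduction_step_cons (a : letter) (x y : word) :
  reduction_step x y -> reduction_step (a :: x) (a :: y).
Proof.
  intros []; [apply (reduction_RR (a :: v)) | apply (reduction_LL (a :: v))
             | apply (reduction_LR (a :: v)) | apply (reduction_RL (a :: v))].
Qed.

Lemma reduces_cons (a : letter) (x y : word) :
  reduces x y -> reduces (a :: x) (a :: y).
Proof.
  induction 1.
  - apply rt_step, reduction_step_cons; assumption.
  - apply rt_refl.
  - eapply rt_trans; eassumption.
Qed.

Lemma reduces_dup (a : letter) (x : word) : reduces (a :: a :: x) (a :: x).
Proof. destruct a; apply rt_step; [apply (reduction_LL []) | apply (reduction_RR [])]. Qed.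

Lemma reduces_cancel (a : letter) (x : word) : reduces (a :: opp a :: x) x.
Proof. destruct a; apply rt_step; [apply (reduction_LR []) | apply (reduction_RL [])]. Qed.

Lemma reduces_to_letter_or_nil (a : letter) (x : word) :
  reduces (a :: x) [a] \/ reduces (a :: x) [].
Proof.
  revert a; induction x as [|b x IH]; intros a; [left; apply rt_refl|].
  destruct (IH b) as [Hb | Hb]; apply (reduces_cons a) in Hb.
  - destruct (letter_eq_or_opp a b) as [-> | ->].
    + left; eapply rt_trans; [exact Hb | apply reduces_dup].
    + right; eapply rt_trans; [exact Hb | apply reduces_cancel].
  - left; exact Hb.
Qed.

Lemma reduces_collapse (a : letter) (x : word) : reduces (a :: a :: x) [a].
Proof.
  destruct (reduces_to_letter_or_nil a x) as [H | H]; apply (reduces_cons a) in H.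
  - eapply rt_trans; [exact H | apply reduces_dup].
  - exact H.
Qed.

Lemma reduction_step_step (x y : word) : reduction_step x y -> step x y.
Proof. intros []; constructor. Qed.

Lemma derivable_of_reduces (x y : word) : reduces x y -> derivable x y.
Proof.
  induction 1.
  - apply rt_step, reduction_step_step; assumption.
  - apply rt_refl.
  - eapply rt_trans; eassumption.
Qed.

Lemma derivable_of_tail (u w : word) : is_tail u w -> derivable w u.
Proof. intros [v ->]; apply rt_step, rule3. Qed.

Lemma is_tail_cons (u : word) (a : letter) (t : word) :
  is_tail u (a :: t) -> u = a :: t \/ is_tail u t.
Proof.
  intros [[|b v] Hv]; [left; symmetry; exact Hv|].
  injection Hv as _ ->; right; exists v; reflexivity.
Qed.

Lemma is_tail_nil (u : word) : is_tail u [] -> u = [].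
Proof. intros [[|b v] Hv]; [symmetry; exact Hv | discriminate]. Qed.

Record lang_inv (a : letter) (t u : word) : Prop := {
  inv_derivable : derivable (a :: t) u;
  inv_same_head : forall s, u = a :: s -> reduces (a :: t) u;
  inv_opp_head : forall s, u = opp a :: s -> reduces (opp a :: a :: t) u;
  inv_doubled : reduces (a :: a :: t) (a :: u) }.

Lemma lang_inv_nil (a : letter) (t : word) : lang_inv a t [].
Proof.
  split; try discriminate.
  - apply derivable_of_tail; exists (a :: t); symmetry; apply app_nil_r.
  - apply reduces_collapse.
Qed.

Lemma lang_inv_head (a : letter) (t s : word) :
  reduces (a :: t) (a :: s) -> lang_inv a t (a :: s).
Proof.
  intros H; split.
  - apply derivable_of_reduces; exact H.
  - intros; exact H.
  - intros s' Hs; injection Hs as Ha _; contradiction (opp_neq a).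
  - apply reduces_cons; exact H.
Qed.

Lemma lang_inv_cons (a b : letter) (t u : word) :
  lang_inv b t u -> lang_inv a (b :: t) u.
Proof.
  intros [Hder Hsame Hopp Hdoubled].
  destruct (letter_eq_or_opp a b) as [-> | ->].
  - split.
    + eapply rt_trans; [apply (rt_step _ _ _ _ (rule3 [a] (a :: t))) | exact Hder].
    + intros s Hu; eapply rt_trans; [apply reduces_dup | exact (Hsame s Hu)].
    + intros s Hu; eapply rt_trans;
        [apply reduces_cons, reduces_dup | exact (Hopp s Hu)].
    + eapply rt_trans; [apply reduces_dup | exact Hdoubled].
  - rewrite opp_involutive in Hopp; split.
    + eapply rt_trans;
        [apply (rt_step _ _ _ _ (rule3 [a] (opp a :: t))) | exact Hder].
    + exact Hopp.
    + intros s Hu; eapply rt_trans;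
        [apply reduces_cons, reduces_cancel | exact (Hsame s Hu)].
    + destruct u as [|c s]; [apply reduces_collapse|].
      destruct (letter_eq_or_opp a c) as [-> | ->].
      * apply reduces_cons, (Hopp s); reflexivity.
      * eapply rt_trans; [apply reduces_dup|].
        apply reduces_cons, (Hsame s); reflexivity.
Qed.

Lemma lang_inv_of_tail (a : letter) (t u : word) :
  is_tail u (a :: t) -> lang_inv a t u.
Proof.
  revert a u; induction t as [|b t IH]; intros a u Hu;
    (destruct (is_tail_cons _ _ _ Hu) as [-> | Ht];
     [apply lang_inv_head, rt_refl|]).
  - rewrite (is_tail_nil _ Ht); apply lang_inv_nil.
  - apply lang_inv_cons, IH, Ht.
Qed.

Lemma lang_unfold (a b c : letter) (x u : word) :
  lang (a :: b :: c :: x) u ->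
  lang (b :: c :: x) u \/
  exists s, u = a :: s /\ lang (b :: c :: x) s /\
            (starts_with b s \/ (a = b /\ c = opp b)).
Proof. destruct a, b, c; simpl; firstorder. Qed.

Lemma lang_inv_of_lang (a : letter) (t u : word) :
  lang (a :: t) u -> lang_inv a t u.
Proof.
  revert a u; induction t as [|b [|c x] IH]; intros a u Hu.
  - apply lang_inv_of_tail; destruct a; exact Hu.
  - apply lang_inv_of_tail; destruct a, b; exact Hu.
  - destruct (lang_unfold _ _ _ _ _ Hu) as [Hv | [s [-> [Hs Hhead]]]].
    + apply lang_inv_cons, IH, Hv.
    + apply lang_inv_head.
      destruct (IH _ _ Hs) as [_ Hsame _ Hdoubled].
      destruct Hhead as [[s' ->] | [-> ->]].
      * apply reduces_cons, (Hsame s'); reflexivity.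
      * exact Hdoubled.
Qed.

Theorem mainTheorem9 : forall w u : word, lang w u -> derivable w u.
Proof.
  intros [|a t] u H.
  - apply derivable_of_tail; exact H.
  - exact (inv_derivable _ _ _ (lang_inv_of_lang a t u H)).
Qed.
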